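(* Let $\mathsf{X}$ be a finite set of propositional variables. A state property $\mathcal{P}$ over $\mathsf{X}$ is of the form $\|\phi\|_{\mathsf{X}}$ for some formula $\phi$ of $\mathsf{BSML}^{\oslash}$ with propositional variables in $\mathsf{X}$ if and only if $\mathcal{P}$ is union closed and invariant under $k$-bisimulation for some $k\in\mathbb{N}$.
   Context: Formulas of $\mathsf{BSML}^{\oslash}$: $\phi ::= p \mid \neg\phi \mid (\phi\wedge\phi) \mid (\phi\vee\phi) \mid \Diamond\phi \mid \mathrm{NE}\mid \oslash\phi$. A model over $\mathsf{X}$ is $M=(W,R,V)$ with $W\ne\emptyset$, $R\subseteq W\times W$, $V:\mathsf{X}\to\wp(W)$; a state is $s\subseteq W$; $R[w]=\{v:wRv\}$. Support/anti-support: $s\models p$ iff $s\subseteq V(p)$; $s\dashv p$ iff $s\cap V(p)=\emptyset$; $s\models\mathrm{NE}$ iff $s\ne\emptyset$; $s\dashv\mathrm{NE}$ iff $s=\emptyset$; $s\models\neg\phi$ iff $s\dashv\phi$; $s\dashv\neg\phi$ iff $s\models\phi$; $s\models\phi\wedge\psi$ iff both; $s\dashv\phi\wedge\psi$ iff $s=t\cup u$ with $t\dashv\phi$, $u\dashv\psi$; $s\models\phi\vee\psi$ iff $s=t\cup u$ with $t\models\phi$, $u\models\psi$; $s\dashv\phi\vee\psi$ iff $s\dashv\phi$ and $s\dashv\psi$; $s\models\Diamond\phi$ iff each $w\in s$ has a nonempty $t\subseteq R[w]$ with $t\models\phi$; $s\dashv\Diamond\phi$ iff $R[w]\dashv\phi$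 for all $w\in s$; $s\models\oslash\phi$ iff $s\models\phi$ or $s=\emptyset$; $s\dashv\oslash\phi$ iff $s\dashv\phi$. A state property over $\mathsf{X}$ is a class of pointed state models $(M,s)$ over $\mathsf{X}$; $\|\phi\|_{\mathsf{X}}:=\{(M,s):M,s\models\phi\}$. World $k$-bisimilarity: $w\rightleftharpoons_0w'$ iff they agree on all $p\in\mathsf{X}$; $w\rightleftharpoons_{k+1}w'$ iff $w\rightleftharpoons_0w'$ and back-and-forth holds between $R[w]$ and $R'[w']$ w.r.t. $\rightleftharpoons_k$. State $k$-bisimilarity $M,s\rightleftharpoons_kM',s'$: each $w\in s$ is $k$-bisimilar to some $w'\in s'$ and vice versa. $\mathcal{P}$ is invariant under $k$-bisimulation if $(M,s)\in\mathcal{P}$ and $M,s\rightleftharpoons_kM',s'$ imply $(M',s')\in\mathcal{P}$; $\mathcal{P}$ is union closed if whenever $(M,s)\in\mathcal{P}$ for all $s$ in a nonempty set $S$ of states on $M$, then $(M,\bigcup S)\in\mathcal{P}$. *)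

From Stdlib Require Import List.

Definition finite_type (X : Type) : Prop := exists l : list X, forall x : X, In x l.

Inductive form (X : Type) : Type :=
| PVar : X -> form X
| Neg : form X -> form X
| And : form X -> form X -> form X
| Or : form X -> form X -> form X
| Dia : form X -> form X
| NE : form X
| Emp : form X -> form X.

Arguments PVar {X} _.
Arguments Neg {X} _.
Arguments And {X} _ _.
Arguments Or {X} _ _.
Arguments Dia {X} _.
Arguments NE {X}.
Arguments Emp {X} _.

Record model (X : Type) (W : Type) : Type := Model {
  rel : W -> W -> Prop;
  val : X -> W -> Prop;
  carrier_nonempty : inhabited W
}.
Arguments rel {X W} _ _ _.
Arguments val {X W} _ _ _.

Definition state (W : Type) := W -> Prop.

Definition is_union {W : Type} (s t u : state W) : Prop :=
  forall w, s w <-> (t w \/ u w).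

Fixpoint sup {X W : Type} (M : model X W) (phi : form X) (s : state W) {struct phi} : Prop :=
  match phi with
  | PVar p => forall w, s w -> val M p w
  | Neg a => ant M a s
  | And a b => sup M a s /\ sup M b s
  | Or a b => exists t u, is_union s t u /\ sup M a t /\ sup M b u
  | Dia a => forall w, s w ->
       exists t : state W, (exists v, t v) /\ (forall v, t v -> rel M w v) /\ sup M a t
  | NE => exists w, s w
  | Emp a => sup M a s \/ (forall w, ~ s w)
  end
with ant {X W : Type} (M : model X W) (phi : form X) (s : state W) {struct phi} : Prop :=
  match phi with
  | PVar p => forall w, s w -> ~ val M p w
  | Neg a => sup M a s
  | And a b => exists t u, is_union s t u /\ ant M a t /\ ant M b u
  | Or a b => ant M a s /\ ant M b s
  | Dia a => forall w, s w -> ant M a (rel M w)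
  | NE => forall w, ~ s w
  | Emp a => ant M a s
  end.

Definition state_property (X : Type) : Type :=
  forall (W : Type), model X W -> state W -> Prop.

Definition extension {X : Type} (phi : form X) : state_property X :=
  fun W M s => sup M phi s.

Fixpoint wbisim {X W W' : Type} (M : model X W) (M' : model X W') (k : nat)
    (w : W) (w' : W') : Prop :=
  match k with
  | O => forall p : X, val M p w <-> val M' p w'
  | S k' => (forall p : X, val M p w <-> val M' p w') /\
            (forall v, rel M w v -> exists v', rel M' w' v' /\ wbisim M M' k' v v') /\
            (forall v', rel M' w' v' -> exists v, rel M w v /\ wbisim M M' k' v v')
  end.

Definition sbisim {X W W' : Type} (M : model X W) (M' : model X W') (k : nat)
    (s : state W) (s' : state W') : Prop :=
  (forall w, s w -> exists w', s' w' /\ wbisim M M' k w w') /\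
  (forall w', s' w' -> exists w, s w /\ wbisim M M' k w w').

Definition invariant_under_bisim {X : Type} (k : nat) (P : state_property X) : Prop :=
  forall (W W' : Type) (M : model X W) (M' : model X W') (s : state W) (s' : state W'),
    P W M s -> sbisim M M' k s s' -> P W' M' s'.

Definition union_closed {X : Type} (P : state_property X) : Prop :=
  forall (W : Type) (M : model X W) (S : state W -> Prop),
    (exists s, S s) ->
    (forall s, S s -> P W M s) ->
    P W M (fun w => exists s, S s /\ s w).

(* Soundness: the support and anti-support conditions of every formula are closed
   under nonempty unions and, by induction on the formula, invariant under
   k-bisimulation as soon as k bounds its modal depth.

   Completeness: as X is finite, there are finitely many k-bisimulation types of
   worlds, each defined by a classical Hintikka formula. Up to k-bisimilarity a state
   is determined by the set T of types it realises, and T is expressed exactly by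
   theta_T := \/_{c in T} (c /\ NE). Union closure and k-invariance then make P the
   disjunction of the formulas (⊘ theta_T) over the sets T realised by members of P,
   conjoined with NE when P contains no empty state. *)

From Stdlib Require Import List Classical FunctionalExtensionality PropExtensionality Lia.
Import ListNotations.

Definition big_union {W : Type} (S : state W -> Prop) : state W :=
  fun w => exists s, S s /\ s w.

Definition closed_under_unions {W : Type} (A : state W -> Prop) : Prop :=
  forall S : state W -> Prop, (exists s, S s) -> (forall s, S s -> A s) -> A (big_union S).

Definition empty_state {W : Type} (s : state W) : Prop := forall w, ~ s w.

Lemma state_ext {W : Type} (s s' : state W) : (forall w, s w <-> s' w) -> s = s'.
Proof.
  intros H; extensionality w; apply propositional_extensionality; auto.
Qed.

Lemma is_union_eq {W : Type} (s t u : state W) :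
  is_union s t u -> s = (fun w => t w \/ u w).
Proof. apply state_ext. Qed.

Lemma is_union_restrict {W : Type} (s : state W) (A B : W -> Prop) :
  (forall w, s w -> A w \/ B w) ->
  is_union s (fun w => s w /\ A w) (fun w => s w /\ B w).
Proof. intros H w; split; [intros sw; destruct (H w sw); auto | tauto]. Qed.

Lemma state_property_ext {X : Type} (P Q : state_property X) :
  (forall W M s, P W M s <-> Q W M s) -> P = Q.
Proof.
  intros H; apply functional_extensionality_dep; intros W.
  extensionality M; extensionality s; apply propositional_extensionality, H.
Qed.

Lemma closed_under_unions_pointwise {W : Type} (Q : W -> Prop) :
  closed_under_unions (fun s : state W => forall w, s w -> Q w).
Proof. intros S _ HS w (s & Ss & sw); exact (HS s Ss w sw). Qed.

Lemma closed_under_unions_split {W : Type} (A B : state W -> Prop) :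
  closed_under_unions A -> closed_under_unions B ->
  closed_under_unions (fun s => exists t u, is_union s t u /\ A t /\ B u).
Proof.
  intros HA HB S [s0 S0] HS.
  destruct (HS s0 S0) as (t0 & u0 & U0 & At0 & Bu0).
  exists (big_union (fun t => exists s u, S s /\ is_union s t u /\ A t /\ B u)),
         (big_union (fun u => exists s t, S s /\ is_union s t u /\ A t /\ B u)).
  split; [|split].
  - intros w; split.
    + intros (s & Ss & sw). destruct (HS s Ss) as (t & u & U & At & Bu).
      destruct (proj1 (U w) sw); [left; exists t | right; exists u]; split; eauto 10.
    + intros [(t & (s & u & Ss & U & _) & tw) | (u & (s & t & Ss & U & _) & uw)];
        exists s; split; auto; apply U; auto.
  - apply HA; [exists t0, s0, u0; auto | intros t (s & u & _ & _ & At & _); exact At].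
  - apply HB; [exists u0, s0, t0; auto | intros u (s & t & _ & _ & _ & Bu); exact Bu].
Qed.

Lemma sup_ant_closed_under_unions {X W : Type} (M : model X W) (phi : form X) :
  closed_under_unions (sup M phi) /\ closed_under_unions (ant M phi).
Proof.
  induction phi as [p | a IHa | a IHa b IHb | a IHa b IHb | a IHa | | a IHa]; simpl.
  - split; apply closed_under_unions_pointwise.
  - tauto.
  - split.
    + intros S HS H; split; [apply IHa | apply IHb]; auto; intros s Ss; apply H, Ss.
    + exact (closed_under_unions_split _ _ (proj2 IHa) (proj2 IHb)).
  - split.
    + exact (closed_under_unions_split _ _ (proj1 IHa) (proj1 IHb)).
    + intros S HS H; split; [apply IHa | apply IHb]; auto; intros s Ss; apply H, Ss.
  - split; apply closed_under_unions_pointwise.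
  - split; [| apply closed_under_unions_pointwise].
    intros S [s Ss] H. destruct (H s Ss) as [w sw]. exists w, s; auto.
  - split; [| apply IHa].
    intros S HS H.
    destruct (classic (exists s, S s /\ sup M a s)) as [Ha | Hna].
    + left.
      replace (big_union S) with (big_union (fun s => S s /\ sup M a s)).
      * apply IHa; [exact Ha | tauto].
      * apply state_ext; intros w; split; [intros (s & [Ss _] & sw); exists s; auto |].
        intros (s & Ss & sw); exists s; repeat split; auto.
        destruct (H s Ss) as [Hs | Es]; [exact Hs | destruct (Es w sw)].
    + right; intros w (s & Ss & sw).
      destruct (H s Ss) as [Hs | Es]; [apply Hna; eauto | exact (Es w sw)].
Qed.

Lemma extension_union_closed {X : Type} (phi : form X) : union_closed (extension phi).
Proof. intros W M; apply (sup_ant_closed_under_unions M phi). Qed.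

Fixpoint modal_depth {X : Type} (phi : form X) : nat :=
  match phi with
  | PVar _ | NE => 0
  | Neg a | Emp a => modal_depth a
  | And a b | Or a b => max (modal_depth a) (modal_depth b)
  | Dia a => S (modal_depth a)
  end.

Section BisimulationInvariance.

Variables (X W W' : Type) (M : model X W) (M' : model X W').

Lemma wbisim_val k w w' : wbisim M M' k w w' -> forall p, val M p w <-> val M' p w'.
Proof. destruct k; simpl; intros H; [exact H | exact (proj1 H)]. Qed.

Lemma sbisim_successors k w w' :
  wbisim M M' (S k) w w' -> sbisim M M' k (rel M w) (rel M' w').
Proof. intros (_ & Hf & Hb); split; assumption. Qed.

Lemma sbisim_empty k s s' : sbisim M M' k s s' -> empty_state s -> empty_state s'.
Proof. intros [_ Hb] Es w' sw'. destruct (Hb w' sw') as (w & sw & _). exact (Es w sw). Qed.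

Lemma sbisim_nonempty k s s' : sbisim M M' k s s' -> (exists w, s w) -> exists w', s' w'.
Proof. intros [Hf _] [w sw]. destruct (Hf w sw) as (w' & sw' & _); eauto. Qed.

Definition bisim_image k (s' : state W') (t : state W) : state W' :=
  fun w' => s' w' /\ exists w, t w /\ wbisim M M' k w w'.

Lemma sbisim_image k s s' t :
  sbisim M M' k s s' -> (forall w, t w -> s w) -> sbisim M M' k t (bisim_image k s' t).
Proof.
  intros [Hf _] Hts; split.
  - intros w tw. destruct (Hf w (Hts w tw)) as (w' & sw' & Hww).
    exists w'; split; [split|]; eauto.
  - intros w' (_ & w & tw & Hww); eauto.
Qed.

Lemma sbisim_split k s s' t u :
  sbisim M M' k s s' -> is_union s t u ->
  exists t' u', is_union s' t' u' /\ sbisim M M' k t t' /\ sbisim M M' k u u'.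
Proof.
  intros Hs U. exists (bisim_image k s' t), (bisim_image k s' u).
  split; [|split]; try (apply (sbisim_image k s); auto; intros w tw; apply U; auto).
  intros w'; split; [| intros [[sw' _] | [sw' _]]; exact sw'].
  intros sw'. destruct (proj2 Hs w' sw') as (w & sw & Hww).
  destruct (proj1 (U w) sw); [left | right]; split; eauto.
Qed.

Lemma sup_ant_bisim_invariant (phi : form X) : forall k s s',
  modal_depth phi <= k -> sbisim M M' k s s' ->
  (sup M phi s -> sup M' phi s') /\ (ant M phi s -> ant M' phi s').
Proof.
  induction phi as [p | a IHa | a IHa b IHb | a IHa b IHb | a IHa | | a IHa];
    intros k s s' Hk Hs; simpl in *.
  - split; intros H w' sw'; destruct (proj2 Hs w' sw') as (w & sw & Hww);
      rewrite <- (wbisim_val k w w' Hww p); auto.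
  - specialize (IHa k s s' Hk Hs); tauto.
  - assert (Ha : modal_depth a <= k) by lia; assert (Hb : modal_depth b <= k) by lia.
    split.
    + pose proof (IHa k s s' Ha Hs); pose proof (IHb k s s' Hb Hs); tauto.
    + intros (t & u & U & Ht & Hu).
      destruct (sbisim_split k s s' t u Hs U) as (t' & u' & U' & Htt & Huu).
      exists t', u'; split; [exact U' | split].
      * exact (proj2 (IHa k t t' Ha Htt) Ht).
      * exact (proj2 (IHb k u u' Hb Huu) Hu).
  - assert (Ha : modal_depth a <= k) by lia; assert (Hb : modal_depth b <= k) by lia.
    split.
    + intros (t & u & U & Ht & Hu).
      destruct (sbisim_split k s s' t u Hs U) as (t' & u' & U' & Htt & Huu).
      exists t', u'; split; [exact U' | split].
      * exact (proj1 (IHa k t t' Ha Htt) Ht).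
      * exact (proj1 (IHb k u u' Hb Huu) Hu).
    + pose proof (IHa k s s' Ha Hs); pose proof (IHb k s s' Hb Hs); tauto.
  - destruct k as [|k]; [lia|].
    assert (Ha : modal_depth a <= k) by lia.
    split; intros H w' sw'; destruct (proj2 Hs w' sw') as (w & sw & Hww);
      pose proof (sbisim_successors k w w' Hww) as Hsucc.
    + destruct (H w sw) as (t & Ht & tR & Hta).
      pose proof (sbisim_image k _ _ t Hsucc tR) as Htt.
      exists (bisim_image k (rel M' w') t); repeat split.
      * exact (sbisim_nonempty k t _ Htt Ht).
      * intros v' [Rv' _]; exact Rv'.
      * exact (proj1 (IHa k t _ Ha Htt) Hta).
    + exact (proj2 (IHa k _ _ Ha Hsucc) (H w sw)).
  - split.
    + apply (sbisim_nonempty k s s' Hs).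
    + apply (sbisim_empty k s s' Hs).
  - pose proof (IHa k s s' Hk Hs); pose proof (sbisim_empty k s s' Hs).
    unfold empty_state in *; tauto.
Qed.

End BisimulationInvariance.

Lemma extension_bisim_invariant {X : Type} (phi : form X) :
  invariant_under_bisim (modal_depth phi) (extension phi).
Proof.
  intros W W' M M' s s' Hs Hb.
  exact (proj1 (sup_ant_bisim_invariant _ _ _ M M' phi _ s s' (le_n _) Hb) Hs).
Qed.

Inductive cform (X : Type) : Type :=
| CVar : X -> cform X
| CTop : cform X
| CNeg : cform X -> cform X
| CAnd : cform X -> cform X -> cform X
| COr : cform X -> cform X -> cform X
| CDia : cform X -> cform X.
Arguments CVar {X} _.
Arguments CTop {X}.
Arguments CNeg {X} _.
Arguments CAnd {X} _ _.
Arguments COr {X} _ _.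
Arguments CDia {X} _.

Fixpoint holds {X W : Type} (M : model X W) (w : W) (c : cform X) : Prop :=
  match c with
  | CVar p => val M p w
  | CTop => True
  | CNeg a => ~ holds M w a
  | CAnd a b => holds M w a /\ holds M w b
  | COr a b => holds M w a \/ holds M w b
  | CDia a => exists v, rel M w v /\ holds M v a
  end.

Fixpoint emb {X : Type} (c : cform X) : form X :=
  match c with
  | CVar p => PVar p
  | CTop => Emp NE   (* supported by every state *)
  | CNeg a => Neg (emb a)
  | CAnd a b => And (emb a) (emb b)
  | COr a b => Or (emb a) (emb b)
  | CDia a => Dia (emb a)
  end.

Lemma sup_ant_emb {X W : Type} (M : model X W) (c : cform X) : forall s,
  (sup M (emb c) s <-> forall w, s w -> holds M w c) /\
  (ant M (emb c) s <-> forall w, s w -> ~ holds M w c).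
Proof.
  induction c as [p | | a IHa | a IHa b IHb | a IHa b IHb | a IHa]; intros s; simpl.
  - tauto.
  - split; [split; auto; intros _ |].
    { destruct (classic (exists w, s w)) as [E | E]; [left; exact E | right].
      intros w sw; apply E; eauto. }
    split; intros H w sw; [destruct (H w sw) | exact (H w sw I)].
  - rewrite (proj1 (IHa s)), (proj2 (IHa s)); split; [tauto |].
    split; intros H w sw; [intros Hn; exact (Hn (H w sw)) | exact (NNPP _ (H w sw))].
  - rewrite (proj1 (IHa s)), (proj1 (IHb s)); split; [firstorder |].
    split.
    + intros (t & u & U & Ht & Hu) w sw [Ha Hb].
      rewrite (proj2 (IHa t)) in Ht; rewrite (proj2 (IHb u)) in Hu.
      destruct (proj1 (U w) sw); [exact (Ht w ltac:(auto) Ha) | exact (Hu w ltac:(auto) Hb)].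
    + intros H. exists (fun w => s w /\ ~ holds M w a), (fun w => s w /\ ~ holds M w b).
      split; [apply is_union_restrict; intros w sw; apply not_and_or, H, sw |].
      split; [apply (proj2 (IHa _)) | apply (proj2 (IHb _))]; tauto.
  - rewrite (proj2 (IHa s)), (proj2 (IHb s)); split; [| firstorder].
    split.
    + intros (t & u & U & Ht & Hu) w sw.
      rewrite (proj1 (IHa t)) in Ht; rewrite (proj1 (IHb u)) in Hu.
      destruct (proj1 (U w) sw); [left; auto | right; auto].
    + intros H. exists (fun w => s w /\ holds M w a), (fun w => s w /\ holds M w b).
      split; [apply is_union_restrict; exact H |].
      split; [apply (proj1 (IHa _)) | apply (proj1 (IHb _))]; tauto.
  - split; split.
    + intros H w sw. destruct (H w sw) as (t & [v tv] & tR & Ht).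
      rewrite (proj1 (IHa _)) in Ht; eauto.
    + intros H w sw. destruct (H w sw) as (v & Rv & Hv).
      exists (fun x => x = v); split; [eauto | split; [intros x ->; exact Rv |]].
      apply (proj1 (IHa _)); intros x ->; exact Hv.
    + intros H w sw (v & Rv & Hv). exact (proj1 (proj2 (IHa _)) (H w sw) v Rv Hv).
    + intros H w sw. apply (proj2 (IHa _)). intros v Rv Hv. apply (H w sw); eauto.
Qed.

Fixpoint sublists {A : Type} (L : list A) : list (list A) :=
  match L with
  | [] => [[]]
  | x :: L' => map (cons x) (sublists L') ++ sublists L'
  end.

Lemma sublists_incl {A : Type} (L T : list A) : In T (sublists L) -> incl T L.
Proof.
  revert T; induction L as [|a L IHL]; simpl; intros T HT x Hx.
  - destruct HT as [<- | []]; destruct Hx.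
  - apply in_app_or in HT; destruct HT as [HT | HT]; [| right; exact (IHL T HT x Hx)].
    apply in_map_iff in HT; destruct HT as (T' & <- & HT').
    destruct Hx as [<- | Hx]; [left | right; exact (IHL T' HT' x Hx)]; reflexivity.
Qed.

Lemma filter_in_sublists {A : Type} (L : list A) (Q : A -> Prop) :
  exists T, In T (sublists L) /\ forall x, In x T <-> In x L /\ Q x.
Proof.
  induction L as [|a L (T & HT & HTx)]; simpl.
  - exists []; simpl; tauto.
  - destruct (classic (Q a)) as [Qa | Qa].
    + exists (a :: T); split; [apply in_or_app; left; apply in_map, HT |].
      intros x; simpl; rewrite HTx; split; [intros [<- | ?] | intros [[<- | ?] ?]]; tauto.
    + exists T; split; [apply in_or_app; right; exact HT |].
      intros x; rewrite HTx; split; [tauto | intros [[<- | ?] ?]; tauto].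
Qed.

Fixpoint cdias {X : Type} (T : list (cform X)) : cform X :=
  match T with [] => CTop | c :: T' => CAnd (CDia c) (cdias T') end.

Fixpoint cors {X : Type} (T : list (cform X)) : cform X :=
  match T with [] => CNeg CTop | c :: T' => COr c (cors T') end.

Definition cbox {X : Type} (c : cform X) : cform X := CNeg (CDia (CNeg c)).

Section ClassicalTruth.

Variables (X W : Type) (M : model X W).

Lemma holds_cdias w T :
  holds M w (cdias T) <-> forall c, In c T -> exists v, rel M w v /\ holds M v c.
Proof.
  induction T as [|c T IH]; simpl; [tauto |].
  rewrite IH; split; [intros [Hc HT] c' [<- | Hc']; auto | auto].
Qed.

Lemma holds_cors w T : holds M w (cors T) <-> exists c, In c T /\ holds M w c.
Proof.
  induction T as [|c T IH]; simpl; [firstorder |].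
  rewrite IH; split; [intros [Hc | (c' & ? & ?)]; eauto | intros (c' & [<- | ?] & ?); eauto].
Qed.

Lemma holds_cbox w c : holds M w (cbox c) <-> forall v, rel M w v -> holds M v c.
Proof.
  simpl; split.
  - intros H v Rv. apply NNPP; intros Hn; apply H; eauto.
  - intros H (v & Rv & Hn); exact (Hn (H v Rv)).
Qed.

End ClassicalTruth.

Fixpoint atom_types {X : Type} (l : list X) : list (cform X) :=
  match l with
  | [] => [CTop]
  | p :: l' => flat_map (fun c => [CAnd (CVar p) c; CAnd (CNeg (CVar p)) c]) (atom_types l')
  end.

Fixpoint hintikka {X : Type} (l : list X) (k : nat) : list (cform X) :=
  match k with
  | 0 => atom_types l
  | S k' => flat_map (fun a => map (fun T => CAnd a (CAnd (cdias T) (cbox (cors T))))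
                                   (sublists (hintikka l k')))
                     (atom_types l)
  end.

Lemma atom_type_exists {X W : Type} (M : model X W) (l : list X) w :
  exists c, In c (atom_types l) /\ holds M w c.
Proof.
  induction l as [|p l (c & Hc & Hw)]; simpl; [exists CTop; simpl; auto |].
  destruct (classic (val M p w)) as [Hp | Hp];
    [exists (CAnd (CVar p) c) | exists (CAnd (CNeg (CVar p)) c)];
    (split; [apply in_flat_map; exists c; simpl; auto | simpl; auto]).
Qed.

Lemma atom_type_val {X W W' : Type} (M : model X W) (M' : model X W') (l : list X) w w' c :
  In c (atom_types l) -> holds M w c -> holds M' w' c ->
  forall p, In p l -> (val M p w <-> val M' p w').
Proof.
  revert c; induction l as [|q l IH]; simpl; intros c Hc H H' p Hp; [destruct Hp |].
  apply in_flat_map in Hc; destruct Hc as (c' & Hc' & Hc).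
  destruct Hc as [<- | [<- | []]]; simpl in H, H';
    destruct Hp as [<- | Hp]; try tauto; apply (IH c'); tauto.
Qed.

Lemma hintikka_exists {X W : Type} (M : model X W) (l : list X) k w :
  exists c, In c (hintikka l k) /\ holds M w c.
Proof.
  revert w; induction k as [|k IH]; intros w; simpl; [apply atom_type_exists |].
  destruct (atom_type_exists M l w) as (a & Ha & Hwa).
  destruct (filter_in_sublists (hintikka l k) (fun c => exists v, rel M w v /\ holds M v c))
    as (T & HT & HTx).
  exists (CAnd a (CAnd (cdias T) (cbox (cors T)))); split.
  - apply in_flat_map; exists a; split; [exact Ha |]. apply in_map_iff; eauto.
  - split; [exact Hwa | split].
    + apply holds_cdias; intros c Hc; apply HTx, Hc.
    + apply holds_cbox; intros v Rv; apply holds_cors.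
      destruct (IH v) as (c & Hc & Hvc); exists c; split; [apply HTx |]; eauto.
Qed.

Lemma hintikka_wbisim {X : Type} (l : list X) (Hl : forall p, In p l) k :
  forall c, In c (hintikka l k) ->
  forall W W' (M : model X W) (M' : model X W') w w',
  holds M w c -> holds M' w' c -> wbisim M M' k w w'.
Proof.
  induction k as [|k IH]; simpl; intros c Hc W W' M M' w w' H H'.
  - intros p; eapply atom_type_val; eauto.
  - apply in_flat_map in Hc; destruct Hc as (a & Ha & Hc).
    apply in_map_iff in Hc; destruct Hc as (T & <- & HT).
    destruct H as (Hwa & Hdia & Hbox), H' as (Hwa' & Hdia' & Hbox').
    rewrite holds_cdias in Hdia, Hdia'; rewrite holds_cbox in Hbox, Hbox'.
    split; [intros p; eapply atom_type_val; eauto | split].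
    + intros v Rv.
      destruct (proj1 (holds_cors _ _ M v T) (Hbox v Rv)) as (c & Hc & Hvc).
      destruct (Hdia' c Hc) as (v' & Rv' & Hvc').
      exists v'; split; [exact Rv' |].
      apply (IH c); auto. apply (sublists_incl _ _ HT), Hc.
    + intros v' Rv'.
      destruct (proj1 (holds_cors _ _ M' v' T) (Hbox' v' Rv')) as (c & Hc & Hvc').
      destruct (Hdia c Hc) as (v & Rv & Hvc).
      exists v; split; [exact Rv |].
      apply (IH c); auto. apply (sublists_incl _ _ HT), Hc.
Qed.

Fixpoint exact_types {X : Type} (T : list (cform X)) : form X :=
  match T with
  | [] => Neg NE
  | c :: T' => Or (And (emb c) NE) (exact_types T')
  end.

(* The ⊘ lets a disjunct be witnessed by the empty substate, so that every union of
   states described by members of Ts supports the disjunction. *)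
Fixpoint union_of_types {X : Type} (Ts : list (list (cform X))) : form X :=
  match Ts with
  | [] => Neg NE
  | T :: Ts' => Or (Emp (exact_types T)) (union_of_types Ts')
  end.

Section TypeFormulas.

Variables (X W : Type) (M : model X W).

Lemma sup_exact_types (T : list (cform X)) : forall s,
  sup M (exact_types T) s <->
  (forall w, s w -> exists c, In c T /\ holds M w c) /\
  (forall c, In c T -> exists w, s w /\ holds M w c).
Proof.
  induction T as [|c T IH]; intros s; simpl; [firstorder |].
  split.
  - intros (t & u & U & [Ht [w0 tw0]] & Hu).
    rewrite (proj1 (sup_ant_emb M c t)) in Ht; rewrite IH in Hu; destruct Hu as [Hu1 Hu2].
    split.
    + intros w sw. destruct (proj1 (U w) sw) as [tw | uw]; [eauto |].
      destruct (Hu1 w uw) as (c' & ? & ?); eauto.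
    + intros c' [<- | Hc']; [exists w0; split; [apply U |]; auto |].
      destruct (Hu2 c' Hc') as (w & uw & ?); exists w; split; [apply U |]; auto.
  - intros [H1 H2].
    exists (fun w => s w /\ holds M w c), (fun w => s w /\ exists c', In c' T /\ holds M w c').
    split.
    { apply is_union_restrict; intros w sw.
      destruct (H1 w sw) as (c' & [<- | ?] & ?); eauto. }
    split; [split |].
    + apply (proj1 (sup_ant_emb M c _)); tauto.
    + destruct (H2 c (or_introl eq_refl)) as (w & ? & ?); exists w; auto.
    + apply IH; split; [tauto |].
      intros c' Hc'; destruct (H2 c' (or_intror Hc')) as (w & ? & ?); eauto 6.
Qed.

Lemma exact_types_of_state (l : list X) k (s : state W) :
  exists T, In T (sublists (hintikka l k)) /\ sup M (exact_types T) s.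
Proof.
  destruct (filter_in_sublists (hintikka l k) (fun c => exists w, s w /\ holds M w c))
    as (T & HT & HTx).
  exists T; split; [exact HT |]; apply sup_exact_types; split.
  - intros w sw. destruct (hintikka_exists M l k w) as (c & ? & ?).
    exists c; split; [apply HTx |]; eauto.
  - intros c Hc; apply HTx, Hc.
Qed.

Lemma sup_union_of_types_empty Ts s : empty_state s -> sup M (union_of_types Ts) s.
Proof.
  induction Ts as [|T Ts IH]; simpl; intros Es; [exact Es |].
  exists s, s; split; [intros w; tauto | split; [right |]; auto].
Qed.

Lemma sup_union_of_types_in Ts T s :
  In T Ts -> sup M (exact_types T) s -> sup M (union_of_types Ts) s.
Proof.
  induction Ts as [|T0 Ts IH]; simpl; intros HT Hs; [destruct HT |].
  destruct HT as [<- | HT].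
  - exists s, (fun _ => False); split; [intros w; tauto |].
    split; [left; exact Hs | apply sup_union_of_types_empty; intros w []].
  - exists (fun _ => False), s; split; [intros w; tauto |].
    split; [right; intros w [] | auto].
Qed.

Lemma sup_union_of_types_inv (G : state W -> Prop) Ts :
  (forall t u, G t -> G u -> G (fun w => t w \/ u w)) ->
  (forall T s, In T Ts -> sup M (exact_types T) s -> G s) ->
  forall s, sup M (union_of_types Ts) s -> empty_state s \/ G s.
Proof.
  intros HG; induction Ts as [|T Ts IH]; simpl; intros HTs s Hs; [left; exact Hs |].
  destruct Hs as (t & u & U & Ht & Hu). rewrite (is_union_eq _ _ _ U).
  assert (Gt : empty_state t \/ G t) by (destruct Ht; [right; eauto | left; auto]).
  assert (Gu : empty_state u \/ G u) by (apply IH; eauto).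
  destruct Gt as [Et | Gt], Gu as [Eu | Gu].
  - left; intros w [tw | uw]; [exact (Et w tw) | exact (Eu w uw)].
  - right; replace (fun w => t w \/ u w) with u; [exact Gu |].
    apply state_ext; intros w; specialize (Et w); tauto.
  - right; replace (fun w => t w \/ u w) with t; [exact Gt |].
    apply state_ext; intros w; specialize (Eu w); tauto.
  - right; auto.
Qed.

End TypeFormulas.

Lemma exact_types_sbisim {X : Type} (l : list X) (Hl : forall p, In p l) k T
    {W W' : Type} (M : model X W) (M' : model X W') s s' :
  incl T (hintikka l k) -> sup M (exact_types T) s -> sup M' (exact_types T) s' ->
  sbisim M M' k s s'.
Proof.
  intros HT Hs Hs'.
  apply sup_exact_types in Hs, Hs'. destruct Hs as [A B], Hs' as [A' B'].
  split.
  - intros w sw. destruct (A w sw) as (c & Hc & Hwc). destruct (B' c Hc) as (w' & sw' & Hwc').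
    exists w'; split; [exact sw' |].
    exact (hintikka_wbisim l Hl k c (HT c Hc) _ _ M M' w w' Hwc Hwc').
  - intros w' sw'. destruct (A' w' sw') as (c & Hc & Hwc'). destruct (B c Hc) as (w & sw & Hwc).
    exists w; split; [exact sw |].
    exact (hintikka_wbisim l Hl k c (HT c Hc) _ _ M M' w w' Hwc Hwc').
Qed.

Lemma union_closed_binary {X : Type} (P : state_property X) :
  union_closed P ->
  forall W (M : model X W) t u, P W M t -> P W M u -> P W M (fun w => t w \/ u w).
Proof.
  intros HU W M t u Ht Hu.
  replace (fun w => t w \/ u w) with (big_union (fun x => x = t \/ x = u)).
  - apply HU; [exists t; auto | intros x [-> | ->]; auto].
  - apply state_ext; intros w; split; [intros (x & [-> | ->] & xw); auto |].
    intros [tw | uw]; [exists t | exists u]; auto.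
Qed.

Lemma invariant_empty_states {X : Type} k (P : state_property X) :
  invariant_under_bisim k P ->
  forall W W' (M : model X W) (M' : model X W') s s',
  P W M s -> empty_state s -> empty_state s' -> P W' M' s'.
Proof.
  intros HI W W' M M' s s' Hs Es Es'.
  apply (HI W W' M M' s s' Hs); split.
  - intros w sw; destruct (Es w sw).
  - intros w' sw'; destruct (Es' w' sw').
Qed.

Lemma expressive_completeness {X : Type} (P : state_property X) k :
  finite_type X -> union_closed P -> invariant_under_bisim k P ->
  exists phi : form X, forall W (M : model X W) s, P W M s <-> sup M phi s.
Proof.
  intros [l Hl] HU HI.
  destruct (filter_in_sublists (sublists (hintikka l k))
              (fun T => exists W (M : model X W) s, P W M s /\ sup M (exact_types T) s))
    as (Ts & _ & HTs).
  assert (types_in_P : forall W (M : model X W) T s,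
             In T Ts -> sup M (exact_types T) s -> P W M s).
  { intros W M T s HT Hs. apply HTs in HT as (HT & W0 & M0 & s0 & Hs0 & Hth0).
    apply (HI W0 W M0 M s0 s Hs0).
    exact (exact_types_sbisim l Hl k T M0 M s0 s (sublists_incl _ _ HT) Hth0 Hs). }
  assert (P_sup : forall W (M : model X W) s, P W M s -> sup M (union_of_types Ts) s).
  { intros W M s Hs. destruct (exact_types_of_state X W M l k s) as (T & HT & Hth).
    apply (sup_union_of_types_in X W M Ts T s); [apply HTs; eauto 6 | exact Hth]. }
  assert (sup_P : forall W (M : model X W) s,
             sup M (union_of_types Ts) s -> empty_state s \/ P W M s).
  { intros W M. apply sup_union_of_types_inv;
      [apply (union_closed_binary P HU) | intros; eapply types_in_P; eauto]. }
  destruct (classic (exists W (M : model X W) s, P W M s /\ empty_state s))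
    as [(W0 & M0 & s0 & Hs0 & Es0) | no_empty].
  - exists (union_of_types Ts); intros W M s; split; [apply P_sup |].
    intros Hs; destruct (sup_P W M s Hs) as [Es | Ps]; [| exact Ps].
    exact (invariant_empty_states k P HI W0 W M0 M s0 s Hs0 Es0 Es).
  - exists (And (union_of_types Ts) NE); intros W M s; simpl; split.
    + intros Hs; split; [exact (P_sup W M s Hs) |].
      apply NNPP; intros Hne; apply no_empty; exists W, M, s; split; [exact Hs |].
      intros w sw; apply Hne; eauto.
    + intros [Hs [w sw]]. destruct (sup_P W M s Hs) as [Es | Ps]; [destruct (Es w sw) | exact Ps].
Qed.

Theorem theorem3p17 (X : Type) (HX : finite_type X) (P : state_property X) :
  (exists phi : form X, forall (W : Type) (M : model X W) (s : state W),
      P W M s <-> extension phi W M s)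
  <->
  (union_closed P /\ exists k : nat, invariant_under_bisim k P).
Proof.
  split.
  - intros [phi Hphi]. rewrite (state_property_ext P (extension phi) Hphi).
    split; [apply extension_union_closed |].
    exists (modal_depth phi); apply extension_bisim_invariant.
  - intros [HU [k HI]]. exact (expressive_completeness P k HX HU HI).
Qed.
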